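(* Let $V_{Horn}$ be the set of matrices $A\in\partial\mathcal{CP}_5\cap\mathcal{DNN}_5^\circ$ that are orthogonal to some matrix of the form $DHD$ with $D$ a positive diagonal matrix. Then $V_{Horn}$ is the image of $Z_{Horn}$ under the map $\varphi: W\to Sym_5$, $\varphi(X)=XX^{\mathsf T}$.
   Context: $Sym_5$ is the space of real symmetric $5\times 5$ matrices with inner product $\langle A,B\rangle=\operatorname{trace}(A^{\mathsf T}B)$. $\mathcal{CP}_5$ is the cone of matrices $BB^{\mathsf T}$ with $B$ a real $5\times k$ matrix with nonnegative entries; $\mathcal{DNN}_5$ is the cone of positive semidefinite $5\times 5$ matrices with nonnegative entries; $\partial$ and ${}^\circ$ denote boundary and interior in the Euclidean topology. $H$ is the Horn matrix \[H=\begin{pmatrix} 1 & -1 &1& 1& -1 \\ -1 & 1& -1 &1& 1\\ 1 & -1 & 1 & -1 & 1\\ 1 & 1& -1&1& -1\\ -1&1&1&-1&1\end{pmatrix}.\] $W$ is the set of (nonnegative) $5\times 5$ matrices of the form \[\begin{pmatrix} y_{11}& 0&0& y_{41}& y_{51} \\ y_{12} & y_{22}& 0 &0& y_{52}\\ y_{13 }& y_{23}& y_{33} & 0& 0\\ 0 & y_{24}& y_{34}&y_{44}& 0\\ 0&0&y_{35}&y_{45}& y_{55}\end{pmatrix}.\] $Z_{Horn}\subset W$ is the set of all matrices $DB$ where $D$ is a diagonal matrix with positive diagonal entries and \[B = \begin{pmatrix} 1& 0&0& y_4& y_5+1 \\ y_1+1 & 1& 0 &0& y_5\\ y_1 & y_2+1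 & 1 & 0& 0\\ 0 & y_2& y_3+1&1& 0\\ 0&0&y_3&y_4+1&1\end{pmatrix}\operatorname{diag}(z_1,\dots,z_5)\] with $y_1,\dots,y_5,z_1,\dots,z_5$ positive reals. *)

From HB Require Import structures.
From mathcomp Require Import all_boot all_order all_algebra.
From mathcomp Require Import reals.
Set Implicit Arguments. Unset Strict Implicit. Unset Printing Implicit Defensive.
Import Order.TTheory GRing.Theory Num.Theory.
Local Open Scope ring_scope.

Section Defs.
Variable R : realType.

Definition sym5 (A : 'M[R]_5) : Prop := A^T = A.

Definition frob (A B : 'M[R]_5) : R := \tr (A^T *m B).

Definition CP5 (A : 'M[R]_5) : Prop :=
  exists (k : nat) (B : 'M[R]_(5, k)),
    (forall i j, 0 <= B i j) /\ A = B *m B^T.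

Definition psd (A : 'M[R]_5) : Prop :=
  sym5 A /\ forall x : 'cV[R]_5, 0 <= (x^T *m A *m x) 0 0.

Definition DNN5 (A : 'M[R]_5) : Prop := psd A /\ forall i j, 0 <= A i j.

(* Euclidean topology on Sym_5, with the (equivalent) max-entry norm. *)
Definition close (e : R) (A B : 'M[R]_5) : Prop := forall i j, `|B i j - A i j| < e.

Definition sym_interior (S : 'M[R]_5 -> Prop) (A : 'M[R]_5) : Prop :=
  sym5 A /\ exists e : R, 0 < e /\ forall B, sym5 B -> close e A B -> S B.

Definition sym_closure (S : 'M[R]_5 -> Prop) (A : 'M[R]_5) : Prop :=
  sym5 A /\ forall e : R, 0 < e -> exists B, sym5 B /\ S B /\ close e A B.

Definition sym_boundary (S : 'M[R]_5 -> Prop) (A : 'M[R]_5) : Prop :=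
  sym_closure S A /\ ~ sym_interior S A.

Definition Horn : 'M[R]_5 :=
  \matrix_(i < 5, j < 5)
    (if ((j + 5 - i) %% 5 == 1)%N || ((j + 5 - i) %% 5 == 4)%N then -1 else 1).

Definition posvec (d : 'rV[R]_5) : Prop := forall i, 0 < d 0 i.

Definition V_Horn (A : 'M[R]_5) : Prop :=
  sym_boundary CP5 A /\ sym_interior DNN5 A /\
  exists d : 'rV[R]_5, posvec d /\ frob A (diag_mx d *m Horn *m diag_mx d) = 0.

(* The set W: nonnegative matrices with the zero pattern of the paper
   (0-based indices: entry (i,j) may be nonzero only if (i - j) mod 5 <= 2). *)
Definition W (X : 'M[R]_5) : Prop :=
  (forall i j, 0 <= X i j) /\
  (forall i j : 'I_5, (2 < (i + 5 - j) %% 5)%N -> X i j = 0).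

(* The matrix with the pattern of the paper (before right-multiplying by
   diag z), y = (y_1,...,y_5) stored as y 0 0, ..., y 0 4:
   column j has 1 at row j, y_j + 1 at row j+1 (mod 5), y_j at row j+2 (mod 5). *)
Definition HornPattern (y : 'rV[R]_5) : 'M[R]_5 :=
  \matrix_(i < 5, j < 5)
    (if ((i + 5 - j) %% 5 == 0)%N then 1
     else if ((i + 5 - j) %% 5 == 1)%N then y 0 j + 1
     else if ((i + 5 - j) %% 5 == 2)%N then y 0 j
     else 0).

Definition Z_Horn (X : 'M[R]_5) : Prop :=
  exists d y z : 'rV[R]_5, posvec d /\ posvec y /\ posvec z /\
    X = diag_mx d *m (HornPattern y *m diag_mx z).

Definition phi (X : 'M[R]_5) : 'M[R]_5 := X *m X^T.

End Defs.

From Pilot Require Import Defs.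
From HB Require Import structures.
From mathcomp Require Import all_boot all_order all_algebra.
From mathcomp Require Import reals.
From mathcomp Require Import boolp classical_sets topology normedtype derive.
From mathcomp Require Import ring lra.
Import Order.TTheory GRing.Theory Num.Theory.
Local Open Scope ring_scope.
Set Implicit Arguments. Unset Strict Implicit. Unset Printing Implicit Defensive.

(* The Horn form x^T H x is nonnegative on nonnegative vectors, and its
   nonnegative zeros are exactly the vectors of the five cones spanned by
   e_j + e_(j+1) and e_(j+1) + e_(j+2).  If A = B B^T is completely positive
   and orthogonal to D H D, every column of D B is such a zero, so D A D is a
   sum over the five cones of rank-two Gram blocks with moments s_j, p_j, t_j.
   Only p_j and s_j + t_(j-1) matter, and the cyclic system a_j c_j = p_j,
   a_j^2 + c_(j-1)^2 = s_j + t_(j-1) has a positive solution (a fixed point of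
   a monotone real map); this rewrites D A D as F F^T for one matrix F with
   the Horn zero pattern.  Conversely such an F is invertible, so A = X X^T is
   positive definite with positive entries, hence interior to DNN_5, while the
   nonzero copositive matrix D^-1 H D^-1 is orthogonal to A, which puts A on
   the boundary of CP_5.  The forward direction also needs CP_5 to be closed:
   by Caratheodory 25 columns suffice, and compactness does the rest. *)

Definition i0 : 'I_5 := @Ordinal 5 0 isT.
Definition i1 : 'I_5 := @Ordinal 5 1 isT.
Definition i2 : 'I_5 := @Ordinal 5 2 isT.
Definition i3 : 'I_5 := @Ordinal 5 3 isT.
Definition i4 : 'I_5 := @Ordinal 5 4 isT.

Lemma ord5P (P : 'I_5 -> Prop) : P i0 -> P i1 -> P i2 -> P i3 -> P i4 -> forall i, P i.
Proof.
move=> P0 P1 P2 P3 P4 [[|[|[|[|[|k]]]]] lt_k5] //.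
- by rewrite (_ : Ordinal _ = i0) //; apply: val_inj.
- by rewrite (_ : Ordinal _ = i1) //; apply: val_inj.
- by rewrite (_ : Ordinal _ = i2) //; apply: val_inj.
- by rewrite (_ : Ordinal _ = i3) //; apply: val_inj.
- by rewrite (_ : Ordinal _ = i4) //; apply: val_inj.
Qed.

(* Cyclic successor and predecessor, given by tables rather than [ordS] and
   [ord_pred] so that on i0, ..., i4 they compute to the same closed terms,
   which lets lra and ring identify the atoms [x (succ5 i3)] and [x i4]. *)
Definition succ5 (j : 'I_5) : 'I_5 :=
  match val j with 0 => i1 | 1 => i2 | 2 => i3 | 3 => i4 | _ => i0 end.
Definition pred5 (j : 'I_5) : 'I_5 :=
  match val j with 0 => i4 | 1 => i0 | 2 => i1 | 3 => i2 | _ => i3 end.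

Lemma sum5 (V : nmodType) (f : 'I_5 -> V) :
  \sum_i f i = f i0 + f i1 + f i2 + f i3 + f i4.
Proof.
rewrite !big_ord_recl big_ord0 addr0 !addrA.
by congr (_ + _ + _ + _ + _); apply: congr1; apply: val_inj.
Qed.

Section Sums.
Variable R : realDomainType.

Lemma ler_sum_term (I : finType) (F : I -> R) j :
  (forall i, 0 <= F i) -> F j <= \sum_i F i.
Proof. by move=> F_ge0; rewrite (bigD1 j) //= lerDl sumr_ge0. Qed.

Lemma cauchy_schwarz_sum (I : finType) (P : pred I) (f g : I -> R) :
  (\sum_(i | P i) f i * g i) ^+ 2
    <= (\sum_(i | P i) f i ^+ 2) * (\sum_(i | P i) g i ^+ 2).
Proof.
set Sfg := \sum_(i | P i) _; set Sf := \sum_(i | P i) _; set Sg := \sum_(i | P i) _.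
have Sg_ge0 : 0 <= Sg by apply: sumr_ge0 => i _; exact: sqr_ge0.
have expand a b : \sum_(i | P i) (a * f i - b * g i) ^+ 2
                  = a ^+ 2 * Sf - 2 * a * b * Sfg + b ^+ 2 * Sg.
  rewrite /Sf /Sfg /Sg !mulr_sumr -sumrB -big_split.
  by apply: eq_bigr => i _ /=; ring.
have [Sg_gt0|] := ltrP 0 Sg.
  have : 0 <= \sum_(i | P i) (Sg * f i - Sfg * g i) ^+ 2.
    by apply: sumr_ge0 => i _; exact: sqr_ge0.
  rewrite expand => h; have : 0 <= Sg * (Sf * Sg - Sfg ^+ 2) by move: h; rewrite expr2; nra.
  by rewrite pmulr_rge0 // subr_ge0 mulrC.
move=> Sg_le0; have Sg0 : Sg = 0 by apply/eqP; rewrite eq_le Sg_le0.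
have g0 i : P i -> g i = 0.
  move=> Pi; apply/eqP; rewrite -sqrf_eq0; apply/eqP; move: i Pi.
  by apply/psumr_eq0P => // i _; exact: sqr_ge0.
have -> : Sfg = 0 by rewrite /Sfg big1 // => i /g0 ->; rewrite mulr0.
by rewrite Sg0 expr0n mulr0.
Qed.

End Sums.

Lemma gramE (R : pzRingType) m n (B : 'M[R]_(m, n)) i j :
  (B *m B^T) i j = \sum_l B i l * B j l.
Proof. by rewrite !mxE; apply: eq_bigr => l _; rewrite mxE. Qed.

Section HornForm.
Variable R : realType.

Definition horn_form (x : 'I_5 -> R) : R := \sum_i \sum_j x i * Horn R i j * x j.

Lemma Horn_sym : (Horn R)^T = Horn R.
Proof. by apply/matrixP; apply: ord5P; apply: ord5P; rewrite !mxE. Qed.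

(* Two certificates of copositivity: the first is nonnegative on nonnegative
   vectors with x3 <= x4, the second on those with x4 <= x3. *)
Lemma horn_formE x : horn_form x = (x i0 - x i1 + x i2 + x i3 - x i4) ^+ 2
  + 4 * x i1 * x i3 + 4 * x i2 * (x i4 - x i3).
Proof. by rewrite /horn_form !sum5 !mxE /=; ring. Qed.

Lemma horn_formE' x : horn_form x = (x i0 - x i1 + x i2 - x i3 + x i4) ^+ 2
  + 4 * x i1 * x i4 + 4 * x i0 * (x i3 - x i4).
Proof. by rewrite /horn_form !sum5 !mxE /=; ring. Qed.

Lemma horn_form_ge0 x : (forall i, 0 <= x i) -> 0 <= horn_form x.
Proof.
move=> x_ge0; have := x_ge0 i0; have := x_ge0 i1; have := x_ge0 i2.
have := x_ge0 i3; have := x_ge0 i4 => x4 x3 x2 x1 x0.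
have [x34|x43] := lerP (x i3) (x i4).
  by rewrite horn_formE; have := sqr_ge0 (x i0 - x i1 + x i2 + x i3 - x i4); nra.
by rewrite horn_formE'; have := sqr_ge0 (x i0 - x i1 + x i2 - x i3 + x i4); nra.
Qed.

Definition pair_vec (j i : 'I_5) : R := ((i == j) || (i == succ5 j))%:R.

Definition in_horn_cone (j : 'I_5) (x : 'I_5 -> R) : Prop :=
  forall i, x i = x j * pair_vec j i + x (succ5 (succ5 j)) * pair_vec (succ5 j) i.

Lemma horn_form_cone j (a c : R) :
  horn_form (fun i => a * pair_vec j i + c * pair_vec (succ5 j) i) = 0.
Proof. by move: j; apply: ord5P; rewrite /horn_form !sum5 !mxE /pair_vec /=; ring. Qed.

(* All three nonnegative terms of the relevant certificate vanish. *)
Lemma horn_form_eq0 x :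
  (forall i, 0 <= x i) -> horn_form x = 0 -> exists j, in_horn_cone j x.
Proof.
move=> x_ge0 x0; have := x_ge0 i0; have := x_ge0 i1; have := x_ge0 i2.
have := x_ge0 i3; have := x_ge0 i4 => h4 h3 h2 h1 h0.
have [x34|x43] := lerP (x i3) (x i4).
- move: x0; rewrite horn_formE => x0.
  have := sqr_ge0 (x i0 - x i1 + x i2 + x i3 - x i4) => sq_ge0.
  have /eqP : x i1 * x i3 = 0 by nra.
  have /eqP : x i2 * (x i4 - x i3) = 0 by nra.
  have /eqP : (x i0 - x i1 + x i2 + x i3 - x i4) ^+ 2 = 0 by nra.
  rewrite sqrf_eq0 !mulf_eq0 => /eqP sq0 /orP[]/eqP e2 /orP[]/eqP e1.
  + by exists i3; apply: ord5P; rewrite /pair_vec /=; lra.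
  + by exists i4; apply: ord5P; rewrite /pair_vec /=; lra.
  + by exists i3; apply: ord5P; rewrite /pair_vec /=; lra.
  + by exists i0; apply: ord5P; rewrite /pair_vec /=; lra.
- move: x0; rewrite horn_formE' => x0.
  have := sqr_ge0 (x i0 - x i1 + x i2 - x i3 + x i4) => sq_ge0.
  have /eqP : x i1 * x i4 = 0 by nra.
  have /eqP : x i0 * (x i3 - x i4) = 0 by nra.
  have /eqP : (x i0 - x i1 + x i2 - x i3 + x i4) ^+ 2 = 0 by nra.
  rewrite sqrf_eq0 !mulf_eq0 => /eqP sq0 /orP[]/eqP e2 /orP[]/eqP e1.
  + by exists i2; apply: ord5P; rewrite /pair_vec /=; lra.
  + by exists i1; apply: ord5P; rewrite /pair_vec /=; lra.
  + by exists i2; apply: ord5P; rewrite /pair_vec /=; lra.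
  + by exists i1; apply: ord5P; rewrite /pair_vec /=; lra.
Qed.

End HornForm.

Section ConeGram.
Variable R : realType.

(* The Gram matrix of a family of vectors a (e_j + e_(j+1)) + c (e_(j+1) + e_(j+2)),
   each in some cone j, in terms of the moments s_j = sum a^2, p_j = sum a c and
   t_j = sum c^2 over the vectors of cone j. *)
Definition cone_gram (s p t : 'I_5 -> R) (i l : 'I_5) : R :=
  \sum_j (s j * (pair_vec R j i * pair_vec R j l)
          + p j * (pair_vec R j i * pair_vec R (succ5 j) l
                   + pair_vec R (succ5 j) i * pair_vec R j l)
          + t j * (pair_vec R (succ5 j) i * pair_vec R (succ5 j) l)).

(* [pair_vec j] generates both cone j and cone (j - 1), so only the sums
   s_j + t_(j-1) matter. *)
Lemma cone_gram_rebalance s p t s' p' t' :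
  (forall j, s j + t (pred5 j) = s' j + t' (pred5 j)) -> p =1 p' ->
  forall i l, cone_gram s p t i l = cone_gram s' p' t' i l.
Proof.
move=> st_eq p_eq; have := st_eq i0; have := st_eq i1; have := st_eq i2.
have := st_eq i3; have := st_eq i4 => /= e4 e3 e2 e1 e0.
by apply: ord5P; apply: ord5P; rewrite /cone_gram !sum5 !p_eq /pair_vec /=; lra.
Qed.

Lemma cone_gram_corner s p t j : cone_gram s p t j (succ5 (succ5 j)) = p j.
Proof. by move: j; apply: ord5P; rewrite /cone_gram !sum5 /pair_vec /=; ring. Qed.

Lemma cone_gram_gt0 s p t : (forall j, 0 < s j) -> (forall j, 0 < p j) ->
  (forall j, 0 < t j) -> forall i l, 0 < cone_gram s p t i l.
Proof.
move=> s_gt0 p_gt0 t_gt0.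
have := s_gt0 i0; have := s_gt0 i1; have := s_gt0 i2; have := s_gt0 i3; have := s_gt0 i4.
have := p_gt0 i0; have := p_gt0 i1; have := p_gt0 i2; have := p_gt0 i3; have := p_gt0 i4.
have := t_gt0 i0; have := t_gt0 i1; have := t_gt0 i2; have := t_gt0 i3; have := t_gt0 i4.
move=> t4 t3 t2 t1 t0 p4 p3 p2 p1 p0 s4 s3 s2 s1 s0.
by apply: ord5P; apply: ord5P; rewrite /cone_gram !sum5 /pair_vec /=; lra.
Qed.

Definition horn_factor (d y z : 'rV[R]_5) : 'M[R]_5 :=
  diag_mx d *m (HornPattern y *m diag_mx z).

Lemma Z_HornP X : Z_Horn X <->
  exists d y z, [/\ posvec d, posvec y, posvec z & X = horn_factor d y z].
Proof.
split=> [[d [y [z [d_gt0 [y_gt0 [z_gt0 ->]]]]]]|[d [y [z [d_gt0 y_gt0 z_gt0 ->]]]]].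
  by exists d, y, z.
by exists d, y, z.
Qed.

Lemma horn_factorE d y z i j : horn_factor d y z i j
  = d 0 i * (z 0 j * pair_vec R j i + y 0 j * z 0 j * pair_vec R (succ5 j) i).
Proof.
rewrite /horn_factor mul_diag_mx mul_mx_diag !mxE; congr (_ * _).
by move: i j; apply: ord5P; apply: ord5P; rewrite /pair_vec /=; ring.
Qed.

Lemma horn_factor_gram d y z i l :
  phi (horn_factor d y z) i l = d 0 i * d 0 l *
    cone_gram (fun j => z 0 j ^+ 2) (fun j => y 0 j * z 0 j ^+ 2)
              (fun j => (y 0 j * z 0 j) ^+ 2) i l.
Proof.
rewrite /phi gramE /cone_gram mulr_sumr.
by apply: eq_bigr => j _; rewrite !horn_factorE; ring.
Qed.

Lemma horn_factor_W d y z : posvec d -> posvec y -> posvec z -> W (horn_factor d y z).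
Proof.
move=> d_gt0 y_gt0 z_gt0; split=> i j; rewrite horn_factorE.
  have := ltW (d_gt0 i); have := ltW (y_gt0 j); have := ltW (z_gt0 j) => z_ge0 y_ge0 d_ge0.
  by rewrite mulr_ge0 ?addr_ge0 ?mulr_ge0 ?ler0n.
by move: i j; apply: ord5P; apply: ord5P; rewrite /pair_vec //= => _; ring.
Qed.

Lemma Z_Horn_W (X : 'M[R]_5) : Z_Horn X -> W X.
Proof. by case/Z_HornP=> d [y [z [d_gt0 y_gt0 z_gt0 ->]]]; exact: horn_factor_W. Qed.

End ConeGram.

Section HornPatternUnit.
Variable R : realType.

Lemma cyclic_chain_eq0 (w y : 'I_5 -> R) : (forall j, 0 < y j) ->
  (forall j, w j = - (y j * w (succ5 j))) -> forall j, w j = 0.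
Proof.
move=> y_gt0 wE.
have w0 : w i0 = 0.
  have /eqP : w i0 * (1 + y i0 * y i1 * y i2 * y i3 * y i4) = 0.
    by rewrite mulrDr mulr1 {1}(wE i0) (wE i1) (wE i2) (wE i3) (wE i4) /=; ring.
  rewrite mulf_eq0 => /orP[/eqP //|]; rewrite gt_eqF //.
  by apply: addr_gt0; rewrite ?ltr01 ?mulr_gt0.
have w4 : w i4 = 0 by rewrite wE /= w0 mulr0 oppr0.
have w3 : w i3 = 0 by rewrite wE /= w4 mulr0 oppr0.
have w2 : w i2 = 0 by rewrite wE /= w3 mulr0 oppr0.
have w1 : w i1 = 0 by rewrite wE /= w2 mulr0 oppr0.
exact: ord5P.
Qed.

(* With w_j = v_j + v_(j+1), column j of v * HornPattern y reads
   w_j + y_j w_(j+1) = 0; around the odd cycle this forces w = 0, then v = 0. *)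
Lemma horn_pattern_ker_eq0 (y v : 'rV[R]_5) :
  posvec y -> v *m HornPattern y = 0 -> v = 0.
Proof.
move=> y_gt0 /matrixP vHP.
have := vHP 0 i0; have := vHP 0 i1; have := vHP 0 i2; have := vHP 0 i3.
have := vHP 0 i4; rewrite !mxE !sum5 !mxE /= => e4 e3 e2 e1 e0.
have chain := @cyclic_chain_eq0 (fun j => v 0 j + v 0 (succ5 j)) (fun j => y 0 j) y_gt0.
have w0 : forall j, v 0 j + v 0 (succ5 j) = 0 by apply: chain; apply: ord5P => /=; lra.
have := w0 i0; have := w0 i1; have := w0 i2; have := w0 i3; have := w0 i4.
move=> /= u4 u3 u2 u1 u0.
by apply/rowP; apply: ord5P; rewrite mxE; lra.
Qed.

Lemma horn_pattern_unit (y : 'rV[R]_5) : posvec y -> HornPattern y \in unitmx.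
Proof.
move=> y_gt0; rewrite -row_free_unit -kermx_eq0; apply/eqP/row_matrixP => r.
by rewrite row0; apply: horn_pattern_ker_eq0 => //; apply/sub_kermxP; exact: row_sub.
Qed.

Lemma diag_mx_unit (d : 'rV[R]_5) : posvec d -> diag_mx d \in unitmx.
Proof.
move=> d_gt0; rewrite unitmxE det_diag unitfE gt_eqF //.
by apply: prodr_gt0 => i _; exact: d_gt0.
Qed.

Lemma horn_factor_unit (d y z : 'rV[R]_5) : posvec d -> posvec y -> posvec z ->
  horn_factor d y z \in unitmx.
Proof.
move=> d_gt0 y_gt0 z_gt0.
by rewrite !unitmx_mul (diag_mx_unit d_gt0) (diag_mx_unit z_gt0) horn_pattern_unit.
Qed.

End HornPatternUnit.

Lemma monotone_fixpoint (R : realType) (f : R -> R) (lo hi : R) :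
  (forall w, lo <= w -> lo <= f w <= hi) ->
  (forall w w', lo <= w -> w <= w' -> f w <= f w') ->
  exists2 w, lo <= w & f w = w.
Proof.
move=> f_bnd f_mono.
pose E w := lo <= w /\ w <= f w.
have E_lo : E lo by split; [exact: lexx | by have /andP[] := f_bnd lo (lexx lo)].
have E_ub : ubound E hi.
  by move=> w [lo_w w_f]; apply: le_trans w_f _; have /andP[] := f_bnd w lo_w.
have le_sup : ubound E (sup E) by apply: sup_upper_bound; split; [exists lo | exists hi].
have lo_sup : lo <= sup E by exact: le_sup.
have sup_le : sup E <= f (sup E).
  apply: ge_sup; first by exists lo.
  move=> w [lo_w w_f]; apply: (le_trans w_f).
  exact: f_mono lo_w (le_sup w (conj lo_w w_f)).
have f_le : f (sup E) <= sup E.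
  apply: le_sup; split; first by have /andP[] := f_bnd _ lo_sup.
  exact: f_mono.
by exists (sup E) => //; apply/eqP; rewrite eq_le f_le sup_le.
Qed.

Section CyclicSystem.
Variable R : realType.
Variables s t p : 'I_5 -> R.
Hypotheses (s_gt0 : forall j, 0 < s j) (p_gt0 : forall j, 0 < p j)
  (p_le : forall j, p j ^+ 2 <= s j * t j).

Let step j w := s j + t (pred5 j) - p (pred5 j) ^+ 2 / w.

Let step_ge j w : s (pred5 j) <= w -> s j <= step j w.
Proof.
move=> w_ge; have w_gt0 := lt_le_trans (s_gt0 _) w_ge.
suff : p (pred5 j) ^+ 2 / w <= t (pred5 j) by rewrite /step; lra.
rewrite ler_pdivrMr //; have := p_le (pred5 j); have := s_gt0 (pred5 j); nra.
Qed.

Let step_le j w : 0 < w -> step j w <= s j + t (pred5 j).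
Proof. by move=> w_gt0; rewrite /step lerBlDr lerDl divr_ge0 ?sqr_ge0 ?ltW. Qed.

Let step_mono j w w' : s (pred5 j) <= w -> w <= w' -> step j w <= step j w'.
Proof.
move=> w_ge le_ww'; have w_gt0 := lt_le_trans (s_gt0 _) w_ge.
rewrite /step lerD2l lerN2 ler_pM2l ?exprn_gt0 //.
by rewrite lef_pV2 ?posrE // (lt_le_trans w_gt0).
Qed.

(* With u_j = a_j ^+ 2 and c_j = p_j / a_j the system reads
   u_j = step j u_(j-1) around the cycle: a fixed point of a monotone map. *)
Lemma cyclic_system_solvable : exists a c : 'I_5 -> R,
  [/\ forall j, 0 < a j, forall j, 0 < c j, forall j, a j * c j = p j
    & forall j, a j ^+ 2 + c (pred5 j) ^+ 2 = s j + t (pred5 j)].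
Proof.
pose round w := step i0 (step i4 (step i3 (step i2 (step i1 w)))).
have [w w_ge round_w] : exists2 w, s i0 <= w & round w = w.
  apply: (@monotone_fixpoint _ round (s i0) (s i0 + t i4)) => [w w_ge|w w' w_ge le_ww'].
    apply/andP; split; first by do 5 apply: step_ge.
    by apply: step_le; apply: lt_le_trans (s_gt0 i4) _; do 4 apply: step_ge.
  apply: step_mono; first by do 4 apply: step_ge.
  apply: step_mono; first by do 3 apply: step_ge.
  apply: step_mono; first by do 2 apply: step_ge.
  apply: step_mono; first by apply: step_ge.
  exact: step_mono.
pose u (j : 'I_5) := match val j with
  | 0 => w | 1 => step i1 w | 2 => step i2 (step i1 w)
  | 3 => step i3 (step i2 (step i1 w)) | _ => step i4 (step i3 (step i2 (step i1 w))) end.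
have u_gt0 j : 0 < u j.
  apply: lt_le_trans (s_gt0 j) _; move: j.
  by apply: ord5P => //=; do ?apply: step_ge.
have u_step j : u j = step j (u (pred5 j)) by move: j; apply: ord5P => //=; rewrite round_w.
exists (fun j => Num.sqrt (u j)), (fun j => p j / Num.sqrt (u j)).
have sqr_a j : Num.sqrt (u j) ^+ 2 = u j by rewrite sqr_sqrtr // ltW.
split=> [j|j|j|j]; rewrite ?sqrtr_gt0 ?divr_gt0 ?sqrtr_gt0 //.
  by rewrite mulrC divfK // gt_eqF // sqrtr_gt0.
by rewrite expr_div_n !sqr_a {1}u_step /step subrK.
Qed.

End CyclicSystem.

Section Caratheodory.
Variables (R : rcfType) (m : nat).

Lemma gram_widen n N (B : 'M[R]_(m, n)) : (n <= N)%N -> (forall i j, 0 <= B i j) ->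
  exists C : 'M[R]_(m, N), (forall i j, 0 <= C i j) /\ B *m B^T = C *m C^T.
Proof.
move=> le_nN B_ge0.
pose col (l : nat) := insub l : option 'I_n.
pose C : 'M[R]_(m, N) := \matrix_(i, l) if col l is Some l' then B i l' else 0.
exists C; split=> [i l|]; first by rewrite mxE; case: (col l).
apply/matrixP => i i'; rewrite !gramE.
pose F (l : nat) := if col l is Some l' then B i l' * B i' l' else 0.
transitivity (\sum_(l < n) F l).
  by apply: eq_bigr => l _; rewrite /F /col valK.
rewrite (big_ord_widen _ F le_nN) big_mkcond /=; apply: eq_bigr => l _.
rewrite /F !mxE; case: ifP => lt_ln; first by case: (col l) => [l'|]; rewrite ?mul0r.
by rewrite /col insubN ?lt_ln // mul0r.
Qed.

Lemma gram_dependent n (B : 'M[R]_(m, n)) : (m * m < n)%N ->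
  exists2 lam : 'I_n -> R, (exists l, 0 < lam l)
    & forall i i', \sum_l lam l * (B i l * B i' l) = 0.
Proof.
move=> lt_mn.
pose M : 'M[R]_(n, m * m) := \matrix_(l, q) mxvec (\matrix_(i, i') (B i l * B i' l)) 0 q.
have ker_neq0 : kermx M != 0.
  rewrite -mxrank_eq0 mxrank_ker subn_eq0 -ltnNge.
  by apply: leq_ltn_trans (rank_leq_col M) lt_mn.
have [r row_neq0] : exists r, row r (kermx M) != 0.
  apply/existsP; apply: contraR ker_neq0; rewrite negb_exists => /forallP row0'.
  by apply/eqP/row_matrixP => r; rewrite row0; apply/eqP/negPn.
have [l lam_neq0] : exists l, row r (kermx M) 0 l != 0.
  apply/existsP; apply: contraR row_neq0; rewrite negb_exists => /forallP lam0.
  by apply/eqP/rowP => l; move/negPn/eqP: (lam0 l) => ->; rewrite mxE.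
have lamM : row r (kermx M) *m M = 0 by apply/sub_kermxP; exact: row_sub.
have lam_dep i i' : \sum_l row r (kermx M) 0 l * (B i l * B i' l) = 0.
  transitivity ((row r (kermx M) *m M) 0 (mxvec_index i i')); last by rewrite lamM mxE.
  by rewrite [RHS]mxE; apply: eq_bigr => l' _; congr (_ * _); rewrite mxE mxvecE mxE.
have [lam_gt0|lam_le0] := ltrP 0 (row r (kermx M) 0 l).
  by exists (fun l => row r (kermx M) 0 l); first by exists l.
exists (fun l => - row r (kermx M) 0 l).
  by exists l; rewrite oppr_gt0 lt_neqAle lam_neq0.
by move=> i i'; under eq_bigr do rewrite mulNr; rewrite sumrN lam_dep oppr0.
Qed.

(* Subtracting the dependency, scaled so that its largest coefficient equals 1,
   keeps all column weights nonnegative and kills one column. *)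
Lemma gram_drop_column n (B : 'M[R]_(m, n.+1)) : (m * m <= n)%N ->
  (forall i j, 0 <= B i j) ->
  exists C : 'M[R]_(m, n), (forall i j, 0 <= C i j) /\ B *m B^T = C *m C^T.
Proof.
move=> le_mn B_ge0; have [lam [l1 lam1_gt0] lam_dep] := gram_dependent B le_mn.
have [l0 _ lam_max] := @arg_maxP _ _ _ l1 predT lam isT.
have lam0_gt0 : 0 < lam l0 by apply: lt_le_trans lam1_gt0 (lam_max l1 isT).
pose w l := 1 - lam l / lam l0.
have w_ge0 l : 0 <= w l by rewrite subr_ge0 ler_pdivrMr // mul1r; exact: lam_max.
have w0 : w l0 = 0 by rewrite /w divff ?subrr // gt_eqF.
have gram_w i i' : \sum_l B i l * B i' l = \sum_l w l * (B i l * B i' l).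
  under [RHS]eq_bigr do rewrite mulrBl mul1r mulrAC.
  by rewrite sumrB -mulr_suml lam_dep mul0r subr0.
pose C : 'M[R]_(m, n) := \matrix_(i, l) (Num.sqrt (w (lift l0 l)) * B i (lift l0 l)).
exists C; split=> [i l|]; first by rewrite mxE mulr_ge0 ?sqrtr_ge0.
apply/matrixP => i i'; rewrite !gramE gram_w (bigD1_ord l0) //= w0 mul0r add0r.
apply: eq_bigr => l _; rewrite !mxE.
by rewrite mulrACA -expr2 sqr_sqrtr.
Qed.

Lemma gram_caratheodory k (B : 'M[R]_(m, k)) : (forall i j, 0 <= B i j) ->
  exists C : 'M[R]_(m, m * m), (forall i j, 0 <= C i j) /\ B *m B^T = C *m C^T.
Proof.
elim: k B => [|n IHn] B B_ge0; first exact: gram_widen.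
have [le_nm|lt_mn] := leqP n.+1 (m * m); first exact: gram_widen.
have [C [C_ge0 ->]] := gram_drop_column lt_mn B_ge0.
exact: IHn.
Qed.

End Caratheodory.

Section CPClosed.
Import numFieldTopology.Exports numFieldNormedType.Exports.
Local Open Scope classical_set_scope.
Variable R : realType.

Lemma vec_mxE m n (v : 'rV[R]_(m * n)) i j : vec_mx v i j = v 0 (mxvec_index i j).
Proof. by rewrite -[v in RHS]vec_mxK mxvecE. Qed.

Definition gram_defect (A : 'M[R]_5) (v : 'rV[R]_(5 * (5 * 5))) : R :=
  \sum_i \sum_i' `|(vec_mx v *m (vec_mx v)^T) i i' - A i i'|.

Lemma continuous_sum (T : topologicalType) n (g : 'I_n -> T -> R) :
  (forall i, continuous (g i)) -> continuous (fun x => \sum_i g i x).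
Proof. by move=> g_cont; apply: continuous_big => //; exact: add_continuous. Qed.

Lemma gram_defect_continuous A : continuous (gram_defect A).
Proof.
have -> : gram_defect A = fun v => \sum_i \sum_i'
    `|\sum_l v 0 (mxvec_index i l) * v 0 (mxvec_index i' l) - A i i'|.
  apply: funext => v; apply: eq_bigr => i _; apply: eq_bigr => i' _.
  by rewrite gramE; under eq_bigr do rewrite !vec_mxE.
apply: continuous_sum => i; apply: continuous_sum => i'.
have entry_cont : continuous (fun v : 'rV[R]_(5 * (5 * 5)) =>
    \sum_l v 0 (mxvec_index i l) * v 0 (mxvec_index i' l) - A i i').
  move=> v; apply: continuousB; last exact: cst_continuous.
  by apply: continuous_sum => l {}v; apply: continuousM; exact: coord_continuous.
by move=> v; exact: (continuous_comp (entry_cont v) (@norm_continuous _ R^o _)).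
Qed.

Lemma cp5_near_box A e : sym_closure (@CP5 R) A -> 0 < e -> e <= 1 ->
  exists2 v : 'rV[R]_(5 * (5 * 5)),
    forall q, 0 <= v 0 q <= 2 + \sum_i `|A i i| & gram_defect A v <= 25 * e.
Proof.
move=> [_ A_cl] e_gt0 e_le1.
have [B [_ [[k [Bk [Bk_ge0 BE]]] AB_close]]] := A_cl e e_gt0.
have [C [C_ge0 BkC]] := gram_caratheodory Bk_ge0; rewrite {}BkC in BE.
exists (mxvec C) => [q|].
  case/mxvec_indexP: q => i l; rewrite mxvecE C_ge0 /=.
  have : C i l ^+ 2 <= B i i.
    rewrite BE gramE expr2; apply: (ler_sum_term l) => l'.
    exact: mulr_ge0.
  have : B i i - A i i <= e by apply: le_trans (ler_norm _) (ltW (AB_close i i)).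
  have : A i i <= `|A i i| by exact: ler_norm.
  have : `|A i i| <= \sum_i `|A i i| by apply: (ler_sum_term i) => i'.
  by have := C_ge0 i l; nra.
have -> : 25 * e = \sum_(i < 5) \sum_(i' < 5) e.
  by rewrite !sumr_const !card_ord -mulrnA -[RHS]mulr_natl.
apply: ler_sum => i _; apply: ler_sum => i' _.
by rewrite mxvecK -BE; exact: ltW (AB_close i i').
Qed.

(* Near A there are Gram matrices C C^T with C in a fixed compact box of
   5 x 25 nonnegative matrices, so the defect attains the value 0 there. *)
Lemma cp5_closed A : sym_closure (@CP5 R) A -> CP5 A.
Proof.
move=> A_cl; pose M := 2 + \sum_i `|A i i|.
pose box := [set v : 'rV[R]_(5 * (5 * 5)) | forall q, `[0, M] (v ord0 q)].
have box_compact : compact box.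
  by apply: (@rV_compact _ _ (fun=> `[0, M])) => _; exact: segment_compact.
have box0 : box !=set0.
  by exists 0 => q; rewrite /= mxE in_itv /= lexx addr_ge0 ?sumr_ge0.
have [c /[!inE] c_box c_min] := EVT_min_rV box0 box_compact
  (continuous_subspaceT (@gram_defect_continuous A)).
have defect_ge0 v : 0 <= gram_defect A v by apply: sumr_ge0 => i _; apply: sumr_ge0.
have defect0 : gram_defect A c = 0.
  apply/eqP; rewrite eq_le defect_ge0 andbT leNgt; apply/negP => defect_gt0.
  pose e := Num.min 1 (gram_defect A c / 50).
  have e_gt0 : 0 < e by rewrite lt_min ltr01 divr_gt0.
  have e_le1 : e <= 1 by rewrite ge_min lexx.
  have [v v_box v_defect] := cp5_near_box A_cl e_gt0 e_le1.
  have /c_min : v \in box by rewrite inE => q; rewrite /= in_itv /=; exact: v_box.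
  have : e <= gram_defect A c / 50 by rewrite ge_min lexx orbT.
  lra.
exists (5 * 5)%N, (vec_mx c); split=> [i l|].
  by rewrite vec_mxE; have := c_box (mxvec_index i l); rewrite /= in_itv => /andP[].
apply/matrixP => i i'.
have row0 := psumr_eq0P (fun i _ => sumr_ge0 _ (fun i' _ => normr_ge0 _)) defect0 (i := i) isT.
have /eqP := psumr_eq0P (fun i' _ => normr_ge0 _) row0 (i := i') isT.
by rewrite normr_eq0 subr_eq0 => /eqP <-.
Qed.

End CPClosed.

Section QuadraticForms.
Variable R : realFieldType.

Lemma qformE n (B : 'M[R]_n) (x : 'cV[R]_n) :
  (x^T *m B *m x) 0 0 = \sum_i \sum_l x i 0 * B i l * x l 0.
Proof.
rewrite mxE exchange_big; apply: eq_bigr => l _; rewrite mxE mulr_suml.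
by apply: eq_bigr => i _; rewrite mxE.
Qed.

Lemma qform_gram n (X : 'M[R]_n) (x : 'cV[R]_n) :
  (x^T *m (X *m X^T) *m x) 0 0 = \sum_j ((X^T *m x) j 0) ^+ 2.
Proof.
have -> : x^T *m (X *m X^T) *m x = (X^T *m x)^T *m (X^T *m x).
  by rewrite trmx_mul trmxK !mulmxA.
by rewrite mxE; apply: eq_bigr => j _; rewrite mxE expr2.
Qed.

(* x = M^-1 (M x), then the triangle and Cauchy-Schwarz inequalities. *)
Lemma unitmx_coercive n (M : 'M[R]_n) : M \in unitmx ->
  exists2 c, 0 < c & forall x : 'cV[R]_n,
    (\sum_i `|x i 0|) ^+ 2 <= c * \sum_j ((M *m x) j 0) ^+ 2.
Proof.
move=> M_unit; pose a j := \sum_i `|invmx M i j|.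
have a2_ge0 : 0 <= \sum_j a j ^+ 2 by apply: sumr_ge0 => j _; exact: sqr_ge0.
exists (\sum_j a j ^+ 2 + 1) => [|x]; first by rewrite ltr_wpDl.
set w := M *m x.
have sum_le : \sum_i `|x i 0| <= \sum_j a j * `|w j 0|.
  rewrite -[x](mulKmx M_unit) -/w /a; under [leRHS]eq_bigr do rewrite mulr_suml.
  rewrite exchange_big; apply: ler_sum => i _; rewrite mxE.
  by apply: le_trans (ler_norm_sum _ _ _) _; apply: ler_sum => j _; rewrite normrM.
have cs : (\sum_j a j * `|w j 0|) ^+ 2 <= (\sum_j a j ^+ 2) * \sum_j (w j 0) ^+ 2.
  rewrite (_ : \sum_j (w j 0) ^+ 2 = \sum_j `|w j 0| ^+ 2); first exact: cauchy_schwarz_sum.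
  by apply: eq_bigr => j _; rewrite real_normK ?num_real.
have w2_ge0 : 0 <= \sum_j (w j 0) ^+ 2 by apply: sumr_ge0 => j _; exact: sqr_ge0.
have : (\sum_i `|x i 0|) ^+ 2 <= (\sum_j a j * `|w j 0|) ^+ 2.
  by rewrite ler_sqr ?nnegrE ?sumr_ge0 // => j _; rewrite mulr_ge0 ?sumr_ge0.
nra.
Qed.

Lemma mx_gt0_margin m n (A : 'M[R]_(m.+1, n.+1)) :
  (forall i j, 0 < A i j) -> exists2 e, 0 < e & forall i j, e <= A i j.
Proof.
move=> A_gt0.
have [[imin jmin] _ A_min] :=
  @arg_minP _ _ _ (ord0, ord0) predT (fun q => A q.1 q.2) isT.
by exists (A imin jmin) => // i j; exact: (A_min (i, j)).
Qed.

End QuadraticForms.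

Section Interiors.
Variable R : realType.

Lemma qform_close e (A B : 'M[R]_5) (x : 'cV[R]_5) : Defs.close e A B ->
  (x^T *m A *m x) 0 0 - e * (\sum_i `|x i 0|) ^+ 2 <= (x^T *m B *m x) 0 0.
Proof.
move=> AB_close; rewrite !qformE lerBlDr -lerBlDl -sumrB.
rewrite expr2 mulr_suml mulr_sumr; apply: ler_sum => i _.
rewrite -sumrB mulr_sumr mulr_sumr; apply: ler_sum => l _.
rewrite -mulrBl -mulrBr.
have : `|x i 0 * (A i l - B i l) * x l 0| <= e * (`|x i 0| * `|x l 0|).
  rewrite !normrM distrC mulrAC mulrC ler_wpM2r ?mulr_ge0 //.
  exact: ltW (AB_close i l).
by apply: le_trans; exact: ler_norm.
Qed.

Lemma dnn5_interior_gram (X : 'M[R]_5) :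
  X \in unitmx -> (forall i j, 0 < phi X i j) -> sym_interior (@DNN5 R) (phi X).
Proof.
move=> X_unit A_gt0; have [m m_gt0 m_le] := mx_gt0_margin A_gt0.
have /unitmx_coercive[c c_gt0 coercive] : X^T \in unitmx by rewrite unitmx_tr.
pose e := Num.min m c^-1.
have e_gt0 : 0 < e by rewrite lt_min m_gt0 invr_gt0.
have e_le_m : e <= m by rewrite ge_min lexx.
have ec_le1 : e * c <= 1 by rewrite -ler_pdivlMr // mul1r ge_min lexx orbT.
split; first by rewrite /sym5 /phi trmx_mul trmxK.
exists e; split=> // B B_sym AB_close; split; last first.
  move=> i j; have := AB_close i j; have := m_le i j; rewrite ltr_norml; lra.
split=> // x; have := qform_close x AB_close; rewrite /phi qform_gram.
have := coercive x; have : 0 <= \sum_j ((X^T *m x) j 0) ^+ 2.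
  by apply: sumr_ge0 => j _; exact: sqr_ge0.
nra.
Qed.

Lemma dnn5_interior_gt0 (A : 'M[R]_5) : sym_interior (@DNN5 R) A -> forall i j, 0 < A i j.
Proof.
move=> [A_sym [e [e_gt0 DNN_near]]].
have [_ B_ge0] : DNN5 (A - const_mx (e / 2)).
  apply: DNN_near; first by rewrite /sym5 linearB /= A_sym trmx_const.
  by move=> i j; rewrite !mxE addrAC subrr add0r normrN ger0_norm; lra.
by move=> i j; have := B_ge0 i j; rewrite !mxE; lra.
Qed.

End Interiors.

Section HornDuality.
Variable R : realType.

Definition horn_scaled (d : 'rV[R]_5) : 'M[R]_5 := diag_mx d *m Horn R *m diag_mx d.

Lemma horn_scaledE d i j : horn_scaled d i j = d 0 i * Horn R i j * d 0 j.
Proof. by rewrite /horn_scaled mul_mx_diag mul_diag_mx !mxE. Qed.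

Lemma horn_scaled_sym d : (horn_scaled d)^T = horn_scaled d.
Proof. by rewrite /horn_scaled !trmx_mul !tr_diag_mx Horn_sym mulmxA. Qed.

Lemma horn_scaled_neq0 d : posvec d -> horn_scaled d != 0.
Proof.
move=> d_gt0; apply/eqP => /matrixP/(_ i0 i0); rewrite horn_scaledE !mxE /=.
by apply/eqP; rewrite mulr1 gt_eqF // mulr_gt0.
Qed.

Lemma frobE (X Y : 'M[R]_5) : frob X Y = \sum_i \sum_j X i j * Y i j.
Proof.
rewrite /frob /mxtrace exchange_big; apply: eq_bigr => i _; rewrite !mxE.
by apply: eq_bigr => j _; rewrite mxE.
Qed.

Lemma frob_gram_horn k (B : 'M[R]_(5, k)) d :
  frob (B *m B^T) (horn_scaled d) = \sum_l horn_form (fun i => d 0 i * B i l).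
Proof.
rewrite frobE /horn_form.
transitivity (\sum_i \sum_j \sum_l d 0 i * B i l * Horn R i j * (d 0 j * B j l)).
  apply: eq_bigr => i _; apply: eq_bigr => j _; rewrite gramE horn_scaledE mulr_suml.
  by apply: eq_bigr => l _; ring.
by under eq_bigr do rewrite exchange_big; rewrite exchange_big.
Qed.

Lemma cp5_frob_horn_ge0 d B : posvec d -> CP5 B -> 0 <= frob B (horn_scaled d).
Proof.
move=> d_gt0 [k [C [C_ge0 ->]]]; rewrite frob_gram_horn.
apply: sumr_ge0 => l _; apply: horn_form_ge0 => i.
exact: mulr_ge0 (ltW (d_gt0 i)) (C_ge0 i l).
Qed.

(* <A - t K, K> = - t <K, K> < 0, so A - t K leaves S for every t > 0. *)
Lemma frob_dual_not_interior (S : 'M[R]_5 -> Prop) (A K : 'M[R]_5) :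
  K^T = K -> K != 0 -> (forall B, S B -> 0 <= frob B K) -> frob A K = 0 ->
  ~ sym_interior S A.
Proof.
move=> K_sym K_neq0 K_dual AK0 [A_sym [e [e_gt0 S_near]]].
have [[i j] /= Kij_neq0] : exists ij : 'I_5 * 'I_5, K ij.1 ij.2 != 0.
  apply/existsP; apply: contraR K_neq0; rewrite negb_exists => /forallP K0.
  by apply/eqP/matrixP => i j; move/negPn/eqP: (K0 (i, j)) => ->; rewrite mxE.
have KK_gt0 : 0 < frob K K.
  rewrite frobE; apply: lt_le_trans (ler_sum_term i _) => [|i']; last first.
    by apply: sumr_ge0 => j' _; rewrite -expr2 sqr_ge0.
  apply: lt_le_trans (ler_sum_term j _) => [|j']; last by rewrite -expr2 sqr_ge0.
  by rewrite -expr2 exprn_even_gt0.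
pose N := \sum_i \sum_j `|K i j|.
have N_ge0 : 0 <= N by apply: sumr_ge0 => i' _; apply: sumr_ge0.
pose t := e / (1 + N).
have t_gt0 : 0 < t by rewrite divr_gt0 // ltr_pwDl.
have K_le_N i' j' : `|K i' j'| <= N.
  apply: le_trans (ler_sum_term i' _) => [|i'']; last exact: sumr_ge0.
  exact: (ler_sum_term j' (fun _ => normr_ge0 _)).
have : S (A - t *: K).
  apply: S_near; first by rewrite /sym5 linearB linearZ /= A_sym K_sym.
  move=> i' j'; rewrite !mxE addrAC subrr add0r normrN normrM gtr0_norm //.
  have : t * (1 + N) = e by rewrite /t divfK // gt_eqF // ltr_pwDl.
  by have := K_le_N i' j'; nra.
move/K_dual; rewrite /frob linearB /= linearZ /= mulmxBl -scalemxAl linearB /=.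
by rewrite linearZ /= -/(frob A K) -/(frob K K) AK0; nra.
Qed.

End HornDuality.

Section HornFace.
Variable R : realType.

Lemma horn_orthogonal_columns k (B : 'M[R]_(5, k)) d :
  (forall i l, 0 <= B i l) -> posvec d -> frob (B *m B^T) (horn_scaled d) = 0 ->
  forall l, horn_form (fun i => d 0 i * B i l) = 0.
Proof.
move=> B_ge0 d_gt0; rewrite frob_gram_horn => sum0 l.
have x_ge0 l' i : 0 <= d 0 i * B i l' by exact: mulr_ge0 (ltW (d_gt0 i)) (B_ge0 i l').
exact: (psumr_eq0P (fun l' _ => horn_form_ge0 (x_ge0 l')) sum0).
Qed.

Lemma cone_gram_decomposition k (x : 'I_k -> 'I_5 -> R) :
  (forall l, exists j, in_horn_cone j (x l)) ->
  exists s p t : 'I_5 -> R, [/\ forall j, 0 <= s j, forall j, p j ^+ 2 <= s j * t j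
    & forall i i', \sum_l x l i * x l i' = cone_gram s p t i i'].
Proof.
move=> /fin_all_exists[cone x_cone].
exists (fun j => \sum_(l | cone l == j) x l j ^+ 2),
  (fun j => \sum_(l | cone l == j) x l j * x l (succ5 (succ5 j))),
  (fun j => \sum_(l | cone l == j) x l (succ5 (succ5 j)) ^+ 2).
split=> [j|j|i i'].
- by apply: sumr_ge0 => l _; exact: sqr_ge0.
- exact: cauchy_schwarz_sum.
rewrite (partition_big cone predT) //=; apply: eq_bigr => j _.
rewrite !mulr_suml -!big_split /=; apply: eq_bigr => l /eqP <-.
by rewrite (x_cone l i) (x_cone l i'); ring.
Qed.

Lemma horn_face_factor k (B : 'M[R]_(5, k)) (d : 'rV[R]_5) :
  (forall i l, 0 <= B i l) -> posvec d -> (forall i j, 0 < (B *m B^T) i j) ->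
  frob (B *m B^T) (horn_scaled d) = 0 -> exists2 X, Z_Horn X & B *m B^T = phi X.
Proof.
move=> B_ge0 d_gt0 A_gt0 A_orth.
pose x l i := d 0 i * B i l.
have x_cone l : exists j, in_horn_cone j (x l).
  apply: horn_form_eq0; last exact: horn_orthogonal_columns.
  by move=> i; exact: mulr_ge0 (ltW (d_gt0 i)) (B_ge0 i l).
have [s [p [t [s_ge0 p_le dAd]]]] := cone_gram_decomposition x_cone.
have {}dAd i i' : d 0 i * (B *m B^T) i i' * d 0 i' = cone_gram s p t i i'.
  by rewrite -dAd gramE mulr_sumr mulr_suml; apply: eq_bigr => l _; rewrite /x; ring.
have p_gt0 j : 0 < p j by rewrite -(cone_gram_corner s p t) -dAd !mulr_gt0.
have s_gt0 j : 0 < s j.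
  rewrite lt_def s_ge0 andbT; apply: contraTneq (p_le j) => ->.
  by rewrite mul0r -ltNge exprn_gt0.
have [a [c [a_gt0 c_gt0 acE sumE]]] := cyclic_system_solvable s_gt0 p_gt0 p_le.
pose d' : 'rV[R]_5 := \row_i (d 0 i)^-1.
pose y : 'rV[R]_5 := \row_j (c j / a j).
pose z : 'rV[R]_5 := \row_j a j.
exists (horn_factor d' y z).
  by apply/Z_HornP; exists d', y, z; split=> // i; rewrite mxE ?invr_gt0 ?divr_gt0.
apply/matrixP => i i'.
rewrite horn_factor_gram (cone_gram_rebalance (s' := s) (p' := p) (t' := t)).
- rewrite -dAd !mxE; have := d_gt0 i; have := d_gt0 i' => di'_gt0 di_gt0.
  by field; rewrite !gt_eqF.
- by move=> j; rewrite !mxE divfK ?gt_eqF.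
- by move=> j; rewrite !mxE expr2 mulrA divfK ?gt_eqF // mulrC.
Qed.

End HornFace.

Lemma Z_Horn_V_Horn (R : realType) (X : 'M[R]_5) : Z_Horn X -> V_Horn (phi X).
Proof.
move=> X_Z; have [X_ge0 _] := Z_Horn_W X_Z.
have /Z_HornP[d [y [z [d_gt0 y_gt0 z_gt0 XE]]]] := X_Z.
pose d' : 'rV[R]_5 := \row_i (d 0 i)^-1.
have d'_gt0 : posvec d' by move=> i; rewrite mxE invr_gt0.
have A_sym : sym5 (phi X) by rewrite /sym5 /phi trmx_mul trmxK.
have orth : frob (phi X) (horn_scaled d') = 0.
  rewrite frob_gram_horn big1 // => l _.
  rewrite -(horn_form_cone l (z 0 l) (y 0 l * z 0 l)); congr horn_form.
  by apply: funext => i; rewrite XE horn_factorE mxE mulKf // gt_eqF.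
split; [split|split].
- split=> // e e_gt0; exists (phi X); split=> //; split; first by exists 5%N, X.
  by move=> i j; rewrite subrr normr0.
- apply: (frob_dual_not_interior (horn_scaled_sym d') (horn_scaled_neq0 d'_gt0) _ orth).
  by move=> B; exact: cp5_frob_horn_ge0.
- apply: dnn5_interior_gram; first by rewrite XE; exact: horn_factor_unit.
  move=> i j; rewrite XE horn_factor_gram !mulr_gt0 // cone_gram_gt0 // => k.
  + exact: exprn_gt0.
  + by rewrite mulr_gt0 ?exprn_gt0.
  + by rewrite exprn_gt0 ?mulr_gt0.
- by exists d'.
Qed.

Theorem theorem2p6 (R : realType) (A : 'M[R]_5) :
  V_Horn A <-> exists X : 'M[R]_5, W X /\ Z_Horn X /\ A = phi X.
Proof.
split=> [[[A_cl _] [A_int [d [d_gt0 A_orth]]]]|[X [_ [X_Z ->]]]]; last first.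
  exact: Z_Horn_V_Horn.
have [k [B [B_ge0 AE]]] := cp5_closed A_cl; subst A.
have [X X_Z AX] := horn_face_factor B_ge0 d_gt0 (dnn5_interior_gt0 A_int) A_orth.
by exists X; split; [exact: Z_Horn_W | split].
Qed.
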